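(* Let $\Theta$ be a finite set, $b$ a belief function on $\Theta$ with mass function $m_b$, and $\emptyset \subsetneq A \subseteq \Theta$. There is a unique $L_2$ conditional belief function $b_{L_2,\mathcal{M}}(\cdot|A)$ of $b$ with respect to $A$ in the mass space (minimizer of $\|\vec{m}_b - \vec{m}_a\|_{L_2}$ over $\vec{m}_a\in\mathcal{M}_A$), and its mass function is, for all $\emptyset \subsetneq B \subseteq A$, \[ m_{L_2,\mathcal{M}}(B|A) = m_b(B) + \frac{1}{2^{|A|}-1} \sum_{C \not\subseteq A} m_b(C) = m_b(B) + \frac{pl_b(A^c)}{2^{|A|}-1}, \] (and it assigns zero mass to subsets not contained in $A$), where the sum runs over nonempty $C\subseteq\Theta$ not contained in $A$.
   Context: A mass function on a finite set $\Theta$ is $m:2^\Theta\to[0,1]$ with $m(\emptyset)=0$ and $\sum_{A\subseteq\Theta} m(A)=1$; the associated belief function is $b(A)=\sum_{B\subseteq A} m_b(B)$ and plausibility $pl_b(A)=1-b(A^c)$. The mass vector of $b$ is $\vec{m}_b=[m_b(B)]_{\emptyset\subsetneq B\subseteq\Theta}\in\mathbb{R}^{2^{|\Theta|}-1}$. For $\emptyset\subsetneq A\subseteq\Theta$, $\mathcal{M}_A$ is the set of mass vectors of belief functions all of whose focal elements (subsets of nonzero mass) are subsets of $A$. The $L_2$ distance is $\|\vec{m}_b-\vec{m}_{b'}\|_{L_2}=\sqrt{\sum_{\emptyset\subsetneq B\subseteq\Theta}(m_b(B)-m_{b'}(B))^2}$. *)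

(* Theta is a finType T; scalars are an arbitrary real closed
   field R (so that Num.sqrt is available for the L2 norm). *)
From HB Require Import structures.
From mathcomp Require Import all_boot all_order all_algebra.
Set Implicit Arguments. Unset Strict Implicit. Unset Printing Implicit Defensive.
Import Order.TTheory GRing.Theory Num.Theory.
Local Open Scope ring_scope.

Definition is_mass (R : numDomainType) (T : finType) (m : {ffun {set T} -> R}) : Prop :=
  [/\ m set0 = 0, (forall A, 0 <= m A) & \sum_(A : {set T}) m A = 1].

Definition bel (R : numDomainType) (T : finType) (m : {ffun {set T} -> R}) (A : {set T}) : R :=
  \sum_(B : {set T} | B \subset A) m B.
Definition pl (R : numDomainType) (T : finType) (m : {ffun {set T} -> R}) (A : {set T}) : R :=
  1 - bel m (~: A).

Definition in_MA (R : numDomainType) (T : finType) (A : {set T}) (m : {ffun {set T} -> R}) : Prop :=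
  is_mass m /\ (forall B : {set T}, m B != 0 -> B \subset A).

Definition massL2 (R : rcfType) (T : finType) (m m' : {ffun {set T} -> R}) : R :=
  Num.sqrt (\sum_(B : {set T} | B != set0) (m B - m' B) ^+ 2).

Definition is_L2_cond (R : rcfType) (T : finType) (m : {ffun {set T} -> R}) (A : {set T})
    (ma : {ffun {set T} -> R}) : Prop :=
  in_MA A ma /\ (forall m' : {ffun {set T} -> R}, in_MA A m' -> massL2 m ma <= massL2 m m').

From HB Require Import structures.
From mathcomp Require Import all_boot all_order all_algebra.
From mathcomp Require Import ring.
Set Implicit Arguments. Unset Strict Implicit. Unset Printing Implicit Defensive.
Import Order.TTheory GRing.Theory Num.Theory.
Local Open Scope ring_scope.

(* The candidate [L2_cond_mass m A] is the orthogonal projection of [m] onto the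
   affine hyperplane of vectors supported on the nonempty subsets of A with
   total mass 1: it spreads the mass [outer_mass m A] lying outside A evenly over
   the 2^|A| - 1 nonempty subsets of A.  The residual [m - L2_cond_mass m A] is
   constant on those subsets, and the difference of two mass vectors of M_A sums
   to zero, so Pythagoras gives
   [d(m, m')^2 = d(m, L2_cond_mass m A)^2 + d(L2_cond_mass m A, m')^2]
   for every m' in M_A.  The projection is nonnegative, hence lies in M_A, and
   is therefore the unique minimiser. *)

Section MassSpace.

Variables (R : realFieldType) (T : finType).
Implicit Types (m a b : {ffun {set T} -> R}) (A : {set T}).

Definition outer_mass m A : R :=
  \sum_(C : {set T} | (C != set0) && ~~ (C \subset A)) m C.

Definition L2_cond_mass m A : {ffun {set T} -> R} :=
  [ffun B => if (B != set0) && (B \subset A)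
             then m B + outer_mass m A / (2 ^+ #|A| - 1) else 0].

Definition sqdist a b : R := \sum_(B : {set T} | B != set0) (a B - b B) ^+ 2.

Lemma sum_subsets_set0 A (F : {set T} -> R) :
  \sum_(B : {set T} | B \subset A) F B
  = F set0 + \sum_(B : {set T} | (B != set0) && (B \subset A)) F B.
Proof.
by rewrite (bigD1 set0) ?sub0set //=; congr (_ + _); apply: eq_bigl => B; rewrite andbC.
Qed.

Lemma sumr_const_nonempty_subsets A (c : R) :
  \sum_(B : {set T} | (B != set0) && (B \subset A)) c = (2 ^+ #|A| - 1) * c.
Proof.
have <- : \sum_(B : {set T} | B \subset A) (1 : R) = 2 ^+ #|A|.
  rewrite (eq_bigl (fun B => B \in powerset A)); last by move=> B; rewrite powersetE.
  by rewrite sumr_const card_powerset natrX.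
rewrite sum_subsets_set0 addrAC subrr add0r mulr_suml.
by under [RHS]eq_bigr do rewrite mul1r.
Qed.

Lemma nonempty_subsets_gt0 A : A != set0 -> 0 < 2 ^+ #|A| - 1 :> R.
Proof. by move=> A0; rewrite subr_gt0 exprn_egt1 ?ltr1n // -lt0n card_gt0. Qed.

Lemma mass_inner_outer m A : is_mass m ->
  \sum_(B : {set T} | (B != set0) && (B \subset A)) m B + outer_mass m A = 1.
Proof.
case=> m0 _ <-; rewrite [RHS](bigID (fun B : {set T} => B \subset A)) /=.
rewrite sum_subsets_set0 m0 add0r; congr (_ + _); apply: eq_bigl => B.
by case: (eqVneq B set0) => [->|]; rewrite ?sub0set.
Qed.

Lemma pl_compl_outer_mass m A : is_mass m -> pl m (~: A) = outer_mass m A.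
Proof.
move=> mm; have [m0 _ _] := mm.
rewrite /pl /bel setCK sum_subsets_set0 m0 add0r.
by rewrite -(mass_inner_outer A mm) addrC addKr.
Qed.

Lemma sum_nonempty_subr_masses a b : is_mass a -> is_mass b ->
  \sum_(B : {set T} | B != set0) (a B - b B) = 0.
Proof.
case=> a0 _ a1 [b0 _ b1].
have : \sum_(B : {set T}) (a B - b B) = 0 by rewrite sumrB a1 b1 subrr.
by rewrite (bigD1 set0) //= a0 b0 subrr add0r.
Qed.

Lemma L2_cond_mass_in_MA m A : is_mass m -> A != set0 -> in_MA A (L2_cond_mass m A).
Proof.
move=> mm A0; have [_ m_ge0 _] := mm.
have N_gt0 := nonempty_subsets_gt0 A0.
split; last by move=> B; rewrite ffunE; case: ifP => [/andP[]|]; rewrite ?eqxx.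
split=> [|B|]; first by rewrite ffunE eqxx.
  rewrite ffunE; case: ifP => // _.
  by rewrite addr_ge0 ?divr_ge0 ?sumr_ge0 // ltW.
under eq_bigr do rewrite ffunE.
rewrite -big_mkcond /= big_split /= sumr_const_nonempty_subsets mulrC divfK ?gt_eqF //.
exact: mass_inner_outer.
Qed.

Lemma sqdist_ge0 a b : 0 <= sqdist a b.
Proof. by apply: sumr_ge0 => B _; rewrite sqr_ge0. Qed.

Lemma sqdist_eq0 a b : a set0 = b set0 -> sqdist a b = 0 -> a = b.
Proof.
move=> ab0 /eqP; rewrite psumr_eq0 => [/allP ab|B _]; last exact: sqr_ge0.
apply/ffunP => B; case: (eqVneq B set0) => [-> //|B0].
by apply/eqP; rewrite -subr_eq0 -sqrf_eq0; have := ab B (mem_index_enum _); rewrite B0.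
Qed.

Lemma sqdist_L2_cond_mass_pythagoras m A m' : is_mass m -> A != set0 -> in_MA A m' ->
  sqdist m m' = sqdist m (L2_cond_mass m A) + sqdist (L2_cond_mass m A) m'.
Proof.
move=> mm A0 [mm' m'_sub]; set ma := L2_cond_mass m A.
set c := outer_mass m A / (2 ^+ #|A| - 1).
have [mma _] := L2_cond_mass_in_MA mm A0.
(* [m - ma] is [- c] on the nonempty subsets of A, and [ma - m'] vanishes off them *)
have cross B : B != set0 -> (m B - ma B) * (ma B - m' B) = - c * (ma B - m' B).
  move=> B0; rewrite /ma ffunE B0 /=; case: ifP => [_|BA]; first by rewrite opprD addNKr.
  have -> : m' B = 0 by apply/eqP; apply: contraFT BA => /m'_sub.
  by rewrite !subr0 !mulr0.
have split_sq B : (m B - m' B) ^+ 2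
    = (m B - ma B) ^+ 2 + (ma B - m' B) ^+ 2 + 2 * ((m B - ma B) * (ma B - m' B)).
  by ring.
rewrite /sqdist (eq_bigr _ (fun B _ => split_sq B)) !big_split /=.
under [X in _ + X]eq_bigr => B B0 do rewrite (cross B B0).
by rewrite -!mulr_sumr (sum_nonempty_subr_masses mma mm') !mulr0 addr0.
Qed.

End MassSpace.

Lemma massL2_le_sqdist (R : rcfType) (T : finType) (m a b : {ffun {set T} -> R}) :
  (massL2 m a <= massL2 m b) = (sqdist m a <= sqdist m b).
Proof. by rewrite ler_sqrt ?sqdist_ge0. Qed.

Lemma L2_cond_mass_is_L2_cond (R : rcfType) (T : finType)
    (m : {ffun {set T} -> R}) (A : {set T}) :
  is_mass m -> A != set0 -> is_L2_cond m A (L2_cond_mass m A).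
Proof.
move=> mm A0; split=> [|m' m'A]; first exact: L2_cond_mass_in_MA.
by rewrite massL2_le_sqdist (sqdist_L2_cond_mass_pythagoras mm A0 m'A) lerDl sqdist_ge0.
Qed.

Lemma is_L2_cond_uniq (R : rcfType) (T : finType)
    (m ma : {ffun {set T} -> R}) (A : {set T}) :
  is_mass m -> A != set0 -> is_L2_cond m A ma -> ma = L2_cond_mass m A.
Proof.
move=> mm A0 [maA ma_min].
have [[ma0 _ _] _] := maA; have [[mc0 _ _] _] := L2_cond_mass_in_MA mm A0.
have := ma_min _ (L2_cond_mass_in_MA mm A0).
rewrite massL2_le_sqdist (sqdist_L2_cond_mass_pythagoras mm A0 maA) gerDl => le0.
apply/esym/sqdist_eq0; first by rewrite ma0 mc0.
by apply/eqP; rewrite eq_le le0 sqdist_ge0.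
Qed.

Theorem theorem3 (R : rcfType) (T : finType) (m : {ffun {set T} -> R}) (A : {set T}) :
  is_mass m -> A != set0 ->
  (exists! ma : {ffun {set T} -> R}, is_L2_cond m A ma) /\
  (forall ma : {ffun {set T} -> R}, is_L2_cond m A ma ->
     (forall B : {set T}, B != set0 -> B \subset A ->
        ma B = m B + (\sum_(C : {set T} | (C != set0) && ~~ (C \subset A)) m C)
                       / (2 ^+ #|A| - 1)
        /\ ma B = m B + pl m (~: A) / (2 ^+ #|A| - 1)) /\
     (forall B : {set T}, ~~ (B \subset A) -> ma B = 0)).
Proof.
move=> mm A0; split.
  exists (L2_cond_mass m A); split; first exact: L2_cond_mass_is_L2_cond.
  by move=> ma /(is_L2_cond_uniq mm A0).
move=> ma /(is_L2_cond_uniq mm A0) ->; split=> B.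
  by move=> B0 BA; rewrite pl_compl_outer_mass // ffunE B0 BA.
by rewrite ffunE => /negbTE ->; rewrite andbF.
Qed.
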